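(* Let $V$ be a finite nonempty set and $f:\{0,1\}^V\to\{0,1\}^V$. (1) If the asynchronous state graph $\Gamma(f)$ has at least two attractors, then $f$ has a 2-critical subnetwork. (2) If $f$ is non-expansive and $\Gamma(f)$ has a cyclic attractor, then $f$ has no fixed point, and hence $f$ has a 0-critical subnetwork.
   Context: $e_i$ is the point of $\{0,1\}^V$ whose only $1$ is at component $i$; $\oplus$ is componentwise addition mod 2; $d$ is the Hamming distance; $f$ is non-expansive if $d(f(x),f(y))\le d(x,y)$ for all $x,y$. $\Gamma(f)$ is the digraph on $\{0,1\}^V$ with an arc $x\to x\oplus e_i$ whenever $f_i(x)\neq x_i$. Attractors are the terminal strongly connected components of $\Gamma(f)$; an attractor is cyclic if it contains at least two points. For nonempty $I\subseteq V$ and $z\in\{0,1\}^{V\setminus I}$, the subnetwork of $f$ induced by $z$ is $h:\{0,1\}^I\to\{0,1\}^I$ with $h(x|_I)=f(x)|_I$ for all $x$ whose restriction to $V\setminus I$ is $z$ ($f$ is a subnetwork of itself); a strict subnetwork is one different from the network. A network is 2-critical if it has at least two fixed points and each of its strict subnetworks has at most one fixed point; 0-critical if it has no fixed point and each of its strict subnetworks has at least one fixed point. *)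

From mathcomp Require Import all_boot.
Set Implicit Arguments. Unset Strict Implicit. Unset Printing Implicit Defensive.

Section BN.
Variable W : finType.

Definition conf := {ffun W -> bool}.
Definition network := conf -> conf.

Definition flip (x : conf) (i : W) : conf := [ffun j => if j == i then ~~ x j else x j].

Definition hamming (x y : conf) : nat := #|[set i | x i != y i]|.
Definition non_expansive (f : network) : Prop :=
  forall x y, hamming (f x) (f y) <= hamming x y.

Definition async_arc (f : network) : rel conf :=
  fun x y => [exists i, (f x i != x i) && (y == flip x i)].

Definition scc (f : network) (x : conf) : {set conf} :=
  [set y | connect (async_arc f) x y && connect (async_arc f) y x].

Definition attractor (f : network) (A : {set conf}) : Prop :=
  (exists x, A = scc f x) /\
  (forall y z, y \in A -> async_arc f y z -> z \in A).

Definition cyclic_attractor (f : network) (A : {set conf}) : Prop :=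
  attractor f A /\ 2 <= #|A|.

Definition fixed_points (f : network) : {set conf} := [set x | f x == x].

End BN.

Definition subV (W : finType) (I : {set W}) : finType := {i : W | i \in I}.

Definition glue (W : finType) (I : {set W}) (y : conf (subV I)) (z : conf W)
  : conf W :=
  [ffun i => if insub i is Some j then y j else z i].

(* subnetwork of f induced by (the restriction to W\I of) z *)
Definition subnet (W : finType) (f : network W) (I : {set W}) (z : conf W)
  : network (subV I) :=
  fun y => [ffun j => f (glue y z) (val j)].
Arguments subnet [W] f I z _.

(* strict subnetworks of g are those on a nonempty proper subset J of W *)
Definition two_critical (W : finType) (g : network W) : Prop :=
  2 <= #|fixed_points g| /\
  (forall (J : {set W}) (z : conf W), J != set0 -> J \proper setT ->
     #|fixed_points (subnet g J z)| <= 1).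

Definition zero_critical (W : finType) (g : network W) : Prop :=
  #|fixed_points g| = 0 /\
  (forall (J : {set W}) (z : conf W), J != set0 -> J \proper setT ->
     1 <= #|fixed_points (subnet g J z)|).

Definition has_subnet_with (W : finType) (f : network W)
  (P : forall U : finType, network U -> Prop) : Prop :=
  exists (I : {set W}) (z : conf W), I != set0 /\ P (subV I) (subnet f I z).

From mathcomp Require Import all_boot.
Set Implicit Arguments. Unset Strict Implicit. Unset Printing Implicit Defensive.

(* Two distinct attractors contain points x and y at minimal Hamming distance.
   No coordinate on which they differ can be updated, since the flip would stay
   in the attractor and get closer to the other point; so x and y, restricted to
   their difference set D, are two fixed points of the subnetwork on D induced
   by x. If f is non-expansive and has a fixed point xs, every non-fixed state
   can update a coordinate towards xs, so every state reaches a fixed point and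
   no attractor is cyclic. In both parts a subnetwork of minimal support with
   the required number of fixed points is critical, because a subnetwork of a
   subnetwork is a subnetwork of strictly smaller support. *)

Definition restrict (W : finType) (I : {set W}) (x : conf W) : conf (subV I) :=
  [ffun j => x (val j)].

Lemma card_subV (W : finType) (I : {set W}) : #|subV I| = #|I|.
Proof. by rewrite card_sig; apply: eq_card => i; rewrite inE. Qed.

Section Glue.
Variables (W : finType) (I : {set W}) (z : conf W).

Lemma glue_val (p : conf (subV I)) (j : subV I) : glue p z (val j) = p j.
Proof. by rewrite ffunE valK. Qed.

Lemma glue_notin (p : conf (subV I)) (i : W) : i \notin I -> glue p z i = z i.
Proof. by move=> iNI; rewrite ffunE insubN. Qed.

Lemma glue_restrict (x : conf W) :
  (forall i, i \notin I -> x i = z i) -> glue (restrict I x) z = x.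
Proof.
move=> xz; apply/ffunP => i; have [iI | iNI] := boolP (i \in I).
  by rewrite -[i]/(val (Sub i iI : subV I)) glue_val ffunE.
by rewrite glue_notin // xz.
Qed.

Lemma subnet_fixedP (f : network W) (p : conf (subV I)) :
  reflect {in I, forall i, f (glue p z) i = glue p z i}
          (p \in fixed_points (subnet f I z)).
Proof.
rewrite inE; apply: (iffP eqP) => [fp i iI | fp].
  by rewrite -[i]/(val (Sub i iI : subV I)) glue_val -{2}fp ffunE.
by apply/ffunP => j; rewrite ffunE fp ?glue_val // (valP j).
Qed.

Lemma restrict_fixed_subnet (f : network W) (x : conf W) :
    (forall i, i \notin I -> x i = z i) -> {in I, forall i, f x i = x i} ->
  restrict I x \in fixed_points (subnet f I z).
Proof. by move=> xz fx; apply/subnet_fixedP; rewrite glue_restrict. Qed.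

End Glue.

Section SubnetOfSubnet.
Variables (V : finType) (f : network V) (I : {set V}) (z : conf V)
  (J : {set subV I}) (z' : conf (subV I)).

Let K : {set V} := val @: J.
Let w : conf V := glue z' z.
Let lift (p : conf (subV J)) : conf (subV K) := restrict K (glue (glue p z') z).

Lemma card_subnet_subnet_support : #|K| = #|J|.
Proof. exact/card_imset/val_inj. Qed.

Let glue_lift (p : conf (subV J)) : glue (lift p) w = glue (glue p z') z.
Proof.
apply: glue_restrict => i iNK; rewrite /w; have [iI | iNI] := boolP (i \in I).
  rewrite -[i]/(val (Sub i iI : subV I)) !glue_val glue_notin //.
  by apply: contra iNK => jJ; apply/imsetP; exists (Sub i iI).
by rewrite !glue_notin.
Qed.

Let lift_inj : injective lift.
Proof.
move=> p q /(congr1 (fun r => glue r w)); rewrite !glue_lift => pq.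
apply/ffunP => j.
by have := congr1 (fun r : conf V => r (val (val j))) pq; rewrite /= !glue_val.
Qed.

Let lift_fixed (p : conf (subV J)) :
  (lift p \in fixed_points (subnet f K w)) =
  (p \in fixed_points (subnet (subnet f I z) J z')).
Proof.
apply/subnet_fixedP/subnet_fixedP; rewrite glue_lift => fp j jJ.
  by rewrite ffunE fp ?glue_val //; apply: imset_f.
by case/imsetP: jJ => k kJ ->; rewrite glue_val -(fp k kJ) ffunE.
Qed.

Lemma card_fixed_subnet_subnet :
  #|fixed_points (subnet (subnet f I z) J z')| = #|fixed_points (subnet f K w)|.
Proof.
rewrite -(card_imset _ lift_inj); apply: eq_card => q.
have /codomP [p ->] : q \in codom lift.
  apply: inj_card_onto => //.
  by rewrite !card_ffun !card_subV card_subnet_subnet_support.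
by rewrite (mem_imset _ _ lift_inj) lift_fixed.
Qed.

End SubnetOfSubnet.

Lemma minimal_subnet (V : finType) (f : network V) (Q : pred nat) :
  (exists I z, I != set0 /\ Q #|fixed_points (subnet f I z)|) ->
  exists I z, [/\ I != set0, Q #|fixed_points (subnet f I z)| &
    forall J z', J != set0 -> J \proper setT ->
      ~~ Q #|fixed_points (subnet (subnet f I z) J z')|].
Proof.
move=> [I0 [z0 [I0n0 QI0]]].
pose P (c : {set V} * conf V) := (c.1 != set0) && Q #|fixed_points (subnet f c.1 c.2)|.
have P0 : P (I0, z0) by apply/andP.
case: (arg_minnP (fun c : {set V} * conf V => #|c.1|) P0).
move=> [I z] /andP[/= In0 QI] Imin.
exists I, z; split=> // J z' Jn0 Jprop; apply/negP => QJ.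
have K_lt : #|val @: J| < #|I|.
  by rewrite card_subnet_subnet_support -(card_subV I) -cardsT; apply: proper_card.
suff : #|I| <= #|val @: J| by rewrite leqNgt K_lt.
apply: (Imin (val @: J, glue z' z)); apply/andP; split.
  by rewrite -card_gt0 card_subnet_subnet_support card_gt0.
by rewrite -card_fixed_subnet_subnet.
Qed.

Lemma two_critical_subnet (V : finType) (f : network V) :
  (exists I z, I != set0 /\ 1 < #|fixed_points (subnet f I z)|) ->
  has_subnet_with f two_critical.
Proof.
case/(@minimal_subnet _ _ (leq 2)) => I [z [In0 fix2 Imin]].
by exists I, z; split=> //; split=> // J z' Jn0 Jprop; rewrite leqNgt Imin.
Qed.

Lemma glue_fixed_subnet_setT (V : finType) (f : network V) (z : conf V) p :
  p \in fixed_points (subnet f setT z) -> glue p z \in fixed_points f.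
Proof.
by move/subnet_fixedP=> fp; rewrite inE; apply/eqP/ffunP => i; rewrite fp ?inE.
Qed.

Lemma zero_critical_subnet (V : finType) (f : network V) :
  0 < #|V| -> fixed_points f = set0 -> has_subnet_with f zero_critical.
Proof.
move=> V_gt0 no_fix.
have /(@minimal_subnet _ _ (eq_op^~ 0)) [I [z' [In0 /eqP fix0 Imin]]] :
    exists I z, I != set0 /\ #|fixed_points (subnet f I z)| == 0.
  exists setT, [ffun=> false]; split; first by rewrite -card_gt0 cardsT.
  rewrite cards_eq0; apply/eqP/setP => p; rewrite in_set0.
  by apply/negP => /glue_fixed_subnet_setT; rewrite no_fix in_set0.
by exists I, z'; split=> //; split=> // J z'' Jn0 Jprop; rewrite lt0n Imin.
Qed.

Section AsynchronousGraph.
Variables (V : finType) (f : network V).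

Lemma hamming_sym (x y : conf V) : hamming x y = hamming y x.
Proof. by apply: eq_card => i; rewrite !inE eq_sym. Qed.

Lemma hamming_flip (x y : conf V) i : x i != y i -> hamming (flip x i) y < hamming x y.
Proof.
move=> xyi; rewrite /hamming [X in _ < X](cardsD1 i) inE xyi ltnS subset_leq_card //.
apply/subsetP => j; rewrite !inE ffunE; case: (eqVneq j i) => [->|_] //=.
by move: xyi; case: (x i); case: (y i).
Qed.

Lemma async_arc_flip (x : conf V) i : f x i != x i -> async_arc f x (flip x i).
Proof. by move=> fxi; apply/existsP; exists i; rewrite fxi eqxx. Qed.

Lemma mem_scc (x : conf V) : x \in scc f x.
Proof. by rewrite inE connect0. Qed.

Lemma attractor_connect (A : {set conf V}) x y :
  attractor f A -> x \in A -> connect (async_arc f) x y -> y \in A.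
Proof.
case=> _ closedA xA /connectP[p]; elim: p x xA => [|x' p IHp] x xA /=.
  by move=> _ ->.
by case/andP=> xx' /IHp; apply; apply: closedA xx'.
Qed.

Lemma attractor_sccE (A : {set conf V}) x : attractor f A -> x \in A -> A = scc f x.
Proof.
case=> -[a ->] _; rewrite inE => /andP[ax xa]; apply/setP => y; rewrite !inE.
apply/andP/andP => -[ay ya].
  by split; [apply: connect_trans xa ay | apply: connect_trans ya ax].
by split; [apply: connect_trans ax ay | apply: connect_trans ya xa].
Qed.

Lemma fixed_connect (x y : conf V) : f x = x -> connect (async_arc f) x y -> y = x.
Proof.
move=> fx /connectP[[|x' p] //= + ->]; case/andP => /existsP[i].
by rewrite fx eqxx.
Qed.

Lemma attractor_closest_fixed (A : {set conf V}) x y i :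
    attractor f A -> x \in A -> (forall x', x' \in A -> hamming x y <= hamming x' y) ->
  x i != y i -> f x i = x i.
Proof.
move=> attrA xA xmin xyi; apply/eqP/negPn/negP => fxi.
have := xmin _ (attractor_connect attrA xA (connect1 (async_arc_flip fxi))).
by rewrite leqNgt hamming_flip.
Qed.

End AsynchronousGraph.

Lemma distinct_attractors_subnet (V : finType) (f : network V) (A B : {set conf V}) :
    attractor f A -> attractor f B -> A != B ->
  exists I z, I != set0 /\ 1 < #|fixed_points (subnet f I z)|.
Proof.
move=> attrA attrB AB; have [[a Aa] _] := attrA; have [[b Bb] _] := attrB.
pose P (c : conf V * conf V) := (c.1 \in A) && (c.2 \in B).
have P0 : P (a, b) by rewrite /P Aa Bb !mem_scc.
case: (arg_minnP (fun c : conf V * conf V => hamming c.1 c.2) P0).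
move=> [x y] /andP[xA yB] xymin.
have fx i : x i != y i -> f x i = x i.
  apply: attractor_closest_fixed attrA xA _ => x' x'A.
  by apply: (xymin (x', y)); apply/andP.
have fy i : y i != x i -> f y i = y i.
  apply: attractor_closest_fixed attrB yB _ => y' y'B.
  by rewrite hamming_sym (hamming_sym y'); apply: (xymin (x, y')); apply/andP.
have [i xyi] : exists i, x i != y i.
  apply/existsP; apply: contraNT AB; rewrite negb_exists => /forallP xy.
  rewrite (attractor_sccE attrA xA) (attractor_sccE attrB yB); apply/eqP; congr scc.
  by apply/ffunP => j; apply/eqP/negPn/xy.
pose D := [set j | x j != y j]; have Di : i \in D by rewrite inE.
exists D, x; split; first by apply/set0Pn; exists i.
apply/card_gt1P; exists (restrict D x), (restrict D y); split.
- by apply: restrict_fixed_subnet => // j; rewrite inE => /fx.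
- apply: restrict_fixed_subnet => j; rewrite inE; first by rewrite negbK => /eqP.
  by rewrite eq_sym => /fy.
- apply/eqP => /(congr1 (fun r : conf (subV D) => r (Sub i Di))).
  by rewrite !ffunE; apply/eqP.
Qed.

Section NonExpansive.
Variables (V : finType) (f : network V).
Hypothesis f_ne : non_expansive f.

Lemma non_expansive_fixed (xs y : conf V) :
  f xs = xs -> (forall i, y i != xs i -> f y i = y i) -> f y = y.
Proof.
(* The coordinates where y differs from xs still differ in f y, and
   non-expansiveness leaves no room for any other difference. *)
move=> fxs fy.
have sub : [set i | y i != xs i] \subset [set i | f y i != xs i].
  by apply/subsetP => i; rewrite !inE => yxi; rewrite fy.
have eqD : [set i | y i != xs i] = [set i | f y i != xs i].
  by apply/eqP; rewrite eqEcard sub /=; have := f_ne y xs; rewrite fxs.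
apply/ffunP => i; case: (eqVneq (y i) (xs i)) => [yxi|/fy //].
have : i \notin [set i | f y i != xs i] by rewrite -eqD inE yxi eqxx.
by rewrite inE negbK yxi => /eqP.
Qed.

Lemma non_expansive_reach_fixed (xs y : conf V) :
  f xs = xs -> exists2 x, connect (async_arc f) y x & f x = x.
Proof.
move=> fxs; have [n] := ubnP (hamming y xs); elim: n y => // n IHn y.
rewrite ltnS => yn; case: (boolP [exists i, (f y i != y i) && (y i != xs i)]).
  case/existsP=> i /andP[fyi yxi].
  have [x yx fx] := IHn (flip y i) (leq_trans (hamming_flip yxi) yn).
  by exists x => //; apply: connect_trans yx; apply/connect1/async_arc_flip.
rewrite negb_exists => /forallP noflip; exists y => //.
apply: non_expansive_fixed fxs _ => i yxi; apply/eqP.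
by move: (noflip i); rewrite yxi andbT negbK.
Qed.

Lemma non_expansive_cyclic_attractor_fixed_points (A : {set conf V}) :
  cyclic_attractor f A -> fixed_points f = set0.
Proof.
case=> attrA A_gt1; apply/setP => xs; rewrite inE in_set0; apply/negP => /eqP fxs.
have [[a Aa] _] := attrA; have [x ax fx] := non_expansive_reach_fixed a fxs.
have xA : x \in A by apply: attractor_connect attrA _ ax; rewrite Aa mem_scc.
suff /subset_leq_card : A \subset [set x] by rewrite cards1 leqNgt A_gt1.
apply/subsetP => y; rewrite (attractor_sccE attrA xA) !inE => /andP[xy _].
by rewrite (fixed_connect fx xy).
Qed.

End NonExpansive.

Theorem proposition2 (V : finType) (f : network V) :
  0 < #|V| ->
  ((exists A B : {set conf V}, [/\ attractor f A, attractor f B & A != B]) ->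
     has_subnet_with f two_critical) /\
  (non_expansive f -> (exists A, cyclic_attractor f A) ->
     fixed_points f = set0 /\ has_subnet_with f zero_critical).
Proof.
move=> V_gt0; split.
  case=> A [B [attrA attrB AB]].
  exact/two_critical_subnet/(distinct_attractors_subnet attrA attrB AB).
move=> f_ne [A cycA].
have no_fix := non_expansive_cyclic_attractor_fixed_points f_ne cycA.
by split=> //; apply: zero_critical_subnet.
Qed.
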